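(* Let $X$ be an absolutely continuous non-negative random variable whose density $f$ is supported on $[0,\nu]$ with $\nu<\infty$, and let $\mu=\mathrm{E}(X)$, assumed to be positive. Then $$H^w\le \mu\log\frac{\nu^2}{2\mu}.$$ Moreover, equality holds if $X$ is uniformly distributed on $[0,\nu]$.
   Context: The weighted entropy of $X$ with density $f$ is $H^w=-\mathrm{E}[X\log f(X)]=-\int_0^{\infty}x\,f(x)\log f(x)\,dx$, with $\log$ the natural logarithm. *)

From HB Require Import structures.
From mathcomp Require Import all_boot all_order all_algebra.
From mathcomp Require Import all_classical all_reals all_analysis.
Set Implicit Arguments. Unset Strict Implicit. Unset Printing Implicit Defensive.
Import Order.TTheory GRing.Theory Num.Theory.
Import numFieldNormedType.Exports.
Local Open Scope classical_set_scope.
Local Open Scope ring_scope.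

Definition is_density (R : realType) (f : R -> R) : Prop :=
  measurable_fun setT f /\ (forall x, 0 <= f x) /\
  (\int[@lebesgue_measure R]_(x in setT) (f x)%:E = 1)%E.

Definition supported_on (R : realType) (f : R -> R) (nu : R) : Prop :=
  forall x, ~ (0 <= x <= nu) -> f x = 0.

Definition dmean (R : realType) (f : R -> R) : R :=
  Rintegral (@lebesgue_measure R) `[0%R, +oo[ (fun x => x * f x).

(* weighted entropy H^w = - int_0^oo x f(x) log f(x) dx  (extended real;
   the integrand is 0 where f x = 0, i.e. 0 log 0 = 0) *)
Definition weighted_entropy (R : realType) (f : R -> R) : \bar R :=
  (\int[@lebesgue_measure R]_(x in `[0%R, +oo[) (- (x * f x * ln (f x)))%:E)%E.

Definition unif_density (R : realType) (nu : R) : R -> R :=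
  fun x => if (0 <= x) && (x <= nu) then nu^-1 else 0.

(** Since [ln t <= t - 1], every [a > 0] gives the pointwise bound
    [- y ln y <= 1/a + (ln a - 1) y] for [y >= 0].  Taking [y = f x], multiplying
    by [x] and integrating over the support [[0, nu]] yields
    [H^w <= nu^2 / (2 a) + (ln a - 1) mu]; the choice [a = nu^2 / (2 mu)] makes
    the right-hand side [mu ln (nu^2 / (2 mu))].  For the uniform density both
    sides equal [(nu/2) ln nu]. *)
From HB Require Import structures.
From mathcomp Require Import all_boot all_order all_algebra.
From mathcomp Require Import all_classical all_reals all_analysis.
From mathcomp Require Import measurable_realfun ring lra.
Import Order.TTheory GRing.Theory Num.Theory.
Import numFieldNormedType.Exports.
Local Open Scope classical_set_scope.
Local Open Scope ring_scope.

Section measurable_integral.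
Context {d : measure_display} {T : measurableType d} {R : realType}.
Variable mu : {measure set T -> \bar R}.

Lemma le_measurable_integral (D : set T) (f g : T -> \bar R) : measurable D ->
  measurable_fun D f -> measurable_fun D g -> (forall x, D x -> (f x <= g x)%E) ->
  (\int[mu]_(x in D) f x <= \int[mu]_(x in D) g x)%E.
Proof.
move=> mD mf mg fg.
have {}fg : {in D, forall x, (f x <= g x)%E} by move=> x /set_mem; exact: fg.
rewrite integralE [leRHS]integralE leeB//.
- apply: ge0_le_integral => //; try exact: measurable_funepos.
  by move=> x /mem_set; exact: funepos_le.
- apply: ge0_le_integral => //; try exact: measurable_funeneg.
  by move=> x /mem_set; exact: funeneg_le.
Qed.

Lemma ge0_integrable_lty (D : set T) (h : T -> R) :
  measurable_fun D h -> (forall x, D x -> 0 <= h x) ->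
  (\int[mu]_(x in D) (h x)%:E < +oo)%E -> mu.-integrable D (EFin \o h).
Proof.
move=> mh h0 hfin; apply/integrableP; split; first exact/measurable_EFinP.
rewrite (eq_integral (fun x => (h x)%:E)) // => x /set_mem Dx.
by rewrite /= ger0_norm // h0.
Qed.

End measurable_integral.

Lemma entropy_term_le {R : realType} (a y : R) : 0 < a -> 0 <= y ->
  - (y * ln y) <= a^-1 + (ln a - 1) * y.
Proof.
move=> a0; rewrite le_eqVlt => /predU1P[<-|y0].
  by rewrite !(mul0r, mulr0) oppr0 addr0 invr_ge0 ltW.
have ay0 : 0 < a * y by rewrite mulr_gt0.
have : ln (a * y)^-1 <= (a * y)^-1 - 1.
  have ayV0 : 0 < (a * y)^-1 by rewrite invr_gt0.
  by rewrite -[X in ln X](subrKC 1) le_ln1Dx //; lra.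
rewrite lnV ?posrE // lnM ?posrE // => h.
have -> : a^-1 = y * (a * y)^-1 by field; rewrite !gt_eqF.
by nra.
Qed.

Section weighted_entropy_bound.
Variable R : realType.
Local Notation mu := (@lebesgue_measure R).

Definition ramp (nu c : R) (x : R) : R := if (0 <= x) && (x <= nu) then x * c else 0.

Lemma measurable_ramp (nu c : R) : measurable_fun setT (ramp nu c).
Proof.
apply: measurable_fun_ifT; last exact: measurable_cst.
- by apply: measurable_and; apply: measurable_fun_ler => //; exact: measurable_id.
- by apply: measurable_funM => //; exact: measurable_id.
Qed.

Lemma is_derive_sqr_halfr (c x : R) :
  is_derive x 1 (fun y : R => y ^+ 2 * (c / 2)) (x * c).
Proof.
have two_neq0 : (2 : R) != 0 by rewrite pnatr_eq0.
apply: is_derive_eq; rewrite scaler0 add0r /GRing.scale /= !mulr1.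
by field.
Qed.

Lemma integral_itv_mulr (nu c : R) : 0 < nu ->
  (\int[mu]_(x in `[0%R, nu]) (x * c)%:E = (nu ^+ 2 / 2 * c)%:E)%E.
Proof.
move=> nu0; have F_cont : continuous (fun y : R => y ^+ 2 * (c / 2)).
  move=> x; apply/differentiable_continuous/derivable1_diffP.
  apply: ex_derive; exact: is_derive_sqr_halfr.
rewrite (@continuous_FTC2 _ _ (fun y : R => y ^+ 2 * (c / 2))) //.
- by rewrite -EFinD expr0n /= mul0r subr0 -mulrA (mulrC c).
- by apply: continuous_in_subspaceT => x _; apply: continuousM => //; exact: cvg_cst.
- split; first by move=> x _; apply: ex_derive; exact: is_derive_sqr_halfr.
  + exact/cvg_at_right_filter/F_cont.
  + exact/cvg_at_left_filter/F_cont.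
- by move=> x _; rewrite derive1E; apply: derive_val; exact: is_derive_sqr_halfr.
Qed.

Lemma integral_ramp (nu c : R) : 0 < nu ->
  (\int[mu]_(x in `[0%R, +oo[) (ramp nu c x)%:E = (nu ^+ 2 / 2 * c)%:E)%E.
Proof.
move=> nu0; rewrite -integral_itv_mulr // [LHS]integral_mkcond [RHS]integral_mkcond.
apply: eq_integral => x _; rewrite /patch /ramp !mem_setE !in_itv /= andbT.
by case: (0 <= x); case: (x <= nu).
Qed.

(* [Rintegral] is [fine] of the integral, and [fine] maps [+oo] and [-oo] to [0]. *)
Lemma integral_mul_dmean (f : R -> R) : 0 < dmean f ->
  (\int[mu]_(x in `[0%R, +oo[) (x * f x)%:E = (dmean f)%:E)%E.
Proof.
rewrite /dmean /Rintegral.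
by case: (\int[_]_(_ in _) _)%E => [r| |] //=; rewrite ltxx.
Qed.

Lemma weighted_entropy_integrand_le (f : R -> R) (nu a x : R) :
  0 < a -> (forall y, 0 <= f y) -> supported_on f nu -> 0 <= x ->
  - (x * f x * ln (f x)) <= ramp nu a^-1 x + (ln a - 1) * (x * f x).
Proof.
move=> a0 f0 supp x0; rewrite /ramp; case: ifP => [_|/negbT xnu].
- have -> : - (x * f x * ln (f x)) = x * - (f x * ln (f x)) by ring.
  have -> : x / a + (ln a - 1) * (x * f x) = x * (a^-1 + (ln a - 1) * f x) by ring.
  by rewrite ler_wpM2l // entropy_term_le.
- by rewrite supp ?(mulr0, mul0r, oppr0, add0r) //; apply/negP.
Qed.

Lemma weighted_entropy_le_affine (f : R -> R) (nu a : R) : 0 < nu -> 0 < a ->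
  measurable_fun setT f -> (forall x, 0 <= f x) -> supported_on f nu ->
  0 < dmean f ->
  (weighted_entropy f <= (nu ^+ 2 / 2 * a^-1 + (ln a - 1) * dmean f)%:E)%E.
Proof.
move=> nu0 a0 mf f0 supp mean0.
have mD : measurable (`[0%R, +oo[ : set R) by exact: measurable_itv.
have D_ge0 (x : R) : `[0%R, +oo[%classic x -> 0 <= x by rewrite /= in_itv /= andbT.
have mxf : measurable_fun setT (fun x : R => x * f x).
  by apply: measurable_funM => //; exact: measurable_id.
have ramp_int : mu.-integrable `[0%R, +oo[ (EFin \o ramp nu a^-1).
  apply: ge0_integrable_lty; first exact: measurable_funTS (measurable_ramp _ _).
    move=> x /D_ge0 x0; rewrite /ramp; case: ifP => // _.
    by rewrite mulr_ge0 // invr_ge0 ltW.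
  by rewrite integral_ramp // ltry.
have mean_int : mu.-integrable `[0%R, +oo[ (EFin \o (fun x => x * f x)).
  apply: ge0_integrable_lty; first exact: measurable_funTS.
    by move=> x /D_ge0 x0; rewrite mulr_ge0.
  by rewrite integral_mul_dmean // ltry.
rewrite /weighted_entropy.
apply: le_trans (le_measurable_integral mu _ _
  (fun x => (ramp nu a^-1 x + (ln a - 1) * (x * f x))%:E) mD _ _ _) _.
- apply/measurable_EFinP/measurable_funTS/measurable_funN/measurable_funM => //.
  by apply: measurableT_comp => //; exact: measurable_ln.
- apply/measurable_EFinP/measurable_funTS/measurable_funD.
    exact: measurable_ramp.
  exact: measurable_funM.
- by move=> x /D_ge0 x0; rewrite lee_fin weighted_entropy_integrand_le.
under eq_integral do rewrite EFinD EFinM.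
rewrite integralD //; last exact: integrableZl.
by rewrite integralZl // integral_ramp // integral_mul_dmean.
Qed.

Lemma weighted_entropy_le (f : R -> R) (nu : R) : 0 < nu ->
  is_density f -> supported_on f nu -> 0 < dmean f ->
  (weighted_entropy f <= (dmean f * ln (nu ^+ 2 / (2 * dmean f)))%:E)%E.
Proof.
move=> nu0 [mf [f0 _]] supp mean0; set m := dmean f in mean0 *.
set a := nu ^+ 2 / (2 * m).
have a0 : 0 < a by rewrite divr_gt0 ?exprn_gt0 ?mulr_gt0.
have -> : m * ln a = nu ^+ 2 / 2 * a^-1 + (ln a - 1) * m.
  by rewrite /a; field; rewrite !gt_eqF.
exact: weighted_entropy_le_affine.
Qed.

Lemma dmean_unif (nu : R) : 0 < nu -> dmean (unif_density nu) = nu / 2.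
Proof.
move=> nu0; rewrite /dmean /Rintegral.
rewrite (@eq_integral _ _ _ mu _ (fun x => (ramp nu nu^-1 x)%:E)); last first.
  by move=> x _; rewrite /unif_density /ramp; case: ifP; rewrite ?mulr0.
by rewrite integral_ramp //=; field; rewrite gt_eqF.
Qed.

Lemma weighted_entropy_unif (nu : R) : 0 < nu ->
  weighted_entropy (unif_density nu) = (nu / 2 * ln nu)%:E.
Proof.
move=> nu0; rewrite /weighted_entropy.
rewrite (@eq_integral _ _ _ mu _ (fun x => (ramp nu (- (nu^-1 * ln nu^-1)) x)%:E)); last first.
  move=> x _; rewrite /unif_density /ramp; case: ifP => _; first by rewrite mulrN mulrA.
  by rewrite !(mulr0, mul0r) oppr0.
by rewrite integral_ramp // lnV ?posrE //; congr EFin; field; rewrite gt_eqF.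
Qed.

End weighted_entropy_bound.

Theorem mainTheorem2 (R : realType) (nu : R) (hnu : 0 < nu) :
  (forall f : R -> R, is_density f -> supported_on f nu ->
     0 < dmean f ->
     (weighted_entropy f <= (dmean f * ln (nu ^+ 2 / (2 * dmean f)))%:E)%E)
  /\
  weighted_entropy (unif_density nu) =
    (dmean (unif_density nu) * ln (nu ^+ 2 / (2 * dmean (unif_density nu))))%:E.
Proof.
split=> [f|]; first exact: weighted_entropy_le.
rewrite weighted_entropy_unif // dmean_unif //; congr (_ * ln _)%:E.
by field; rewrite gt_eqF.
Qed.
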